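(* Let $G_1$ be a group whose centre $Z(G_1)$ has index $k$ in $G_1$ (with $k$ finite). Let $n,m\ge0$, let $G\le G_1^n$ be a subgroup, let $w(\bar x,\bar y)$ be a group word in the variables $\bar x=(x_1,\dots,x_n)$, $\bar y=(y_1,\dots,y_m)$ and their inverses, and let $\bar g\in G_1^m$, $c\in G_1$. If the set $\{\bar h\in G:w(\bar h,\bar g)=c\}$ is $2k^n$-large in $G$, then $w(\bar h,\bar g)=c$ for all $\bar h\in G$.
   Context: A subset $X\subseteq G$ is $k$-large in $G$ if the intersection of any $k$ left translates $\bar a_1X\cap\dots\cap\bar a_kX$ ($\bar a_i\in G$) is non-empty. *)

From mathcomp Require Import all_boot.
Set Implicit Arguments. Unset Strict Implicit. Unset Printing Implicit Defensive.

Record grp := Grp {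
  carrier :> Type;
  gmul : carrier -> carrier -> carrier;
  ginv : carrier -> carrier;
  gone : carrier;
  gmulA : forall x y z, gmul x (gmul y z) = gmul (gmul x y) z;
  gmul1g : forall x, gmul gone x = x;
  gmulVg : forall x, gmul (ginv x) x = gone
}.

Definition in_centre (G : grp) (z : G) : Prop := forall g : G, gmul z g = gmul g z.

(* The centre Z(G) has (finite) index k in G: there are exactly k left cosets
   of Z(G), given by pairwise inequivalent representatives r 0, ..., r (k-1)
   covering G. *)
Definition centre_index (G : grp) (k : nat) : Prop :=
  exists r : 'I_k -> G,
    (forall i j, in_centre (gmul (ginv (r i)) (r j)) -> i = j) /\
    (forall g : G, exists i, in_centre (gmul (ginv (r i)) g)).

Definition tmul (G : grp) n (a b : 'I_n -> G) : 'I_n -> G := fun i => gmul (a i) (b i).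
Definition tinv (G : grp) n (a : 'I_n -> G) : 'I_n -> G := fun i => ginv (a i).
Definition tone (G : grp) n : 'I_n -> G := fun _ => gone G.

Definition is_subgroup (G : grp) n (S : ('I_n -> G) -> Prop) : Prop :=
  S (@tone G n) /\
  (forall a b, S a -> S b -> S (tmul a b)) /\
  (forall a, S a -> S (tinv a)).

(* X (a subset of the subgroup S) is N-large in S: for any N left translates
   a_1 X, ..., a_N X with a_i in S, the intersection is non-empty, i.e. there
   is h with a_i^{-1} h in X for all i. *)
Definition is_large (G : grp) n (S X : ('I_n -> G) -> Prop) (N : nat) : Prop :=
  forall a : 'I_N -> ('I_n -> G), (forall i, S (a i)) ->
    exists h : 'I_n -> G, forall i, X (tmul (tinv (a i)) h).

Inductive word (V : Type) : Type :=
  | WVar of V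
  | WOne
  | WInv of word V
  | WMul of word V & word V.

Fixpoint weval (G : grp) (V : Type) (s : V -> G) (w : word V) : G :=
  match w with
  | WVar v => s v
  | WOne => gone G
  | WInv u => ginv (weval s u)
  | WMul u v => gmul (weval s u) (weval s v)
  end.

Definition weval2 (G : grp) n m (w : word ('I_n + 'I_m)) (h : 'I_n -> G) (g : 'I_m -> G) : G :=
  weval (fun v => match v with inl i => h i | inr j => g j end) w.

From mathcomp Require Import all_boot.
From Stdlib Require Import Classical ClassicalEpsilon FunctionalExtensionality.

(* Write f(h) = w(h, g).  The tuples of central elements form a subgroup Z of
   G1^n of index at most k^n, and f(h z) = f(h) w(z, 1) for z in Z.  Translating
   X by s h_j^-1, with s running over representatives of the cosets of Z in G
   and h_1, ..., h_r in G, the r k^n-largeness of X gives a single z in Z with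
   h_j z in X for every j.  With h_1 = h_2 = h this gives z1 with h z1 in X;
   with h_1 = h, h_2 = h z1^-1 it gives z with f(h) w(z, 1) = c =
   f(h z1^-1) w(z, 1).  Hence f(h) = f(h z1^-1) w(z1, 1) = f(h) w(z1, 1) =
   f(h z1) = c. *)

Section GroupTheory.
Context {G : grp}.
Implicit Types x y z : G.

Lemma mulgV x : gmul x (ginv x) = gone G.
Proof.
rewrite -[gmul x _]gmul1g -(gmulVg (ginv x)) -gmulA (gmulA (ginv x)) gmulVg.
by rewrite gmul1g.
Qed.

Lemma mulg1 x : gmul x (gone G) = x.
Proof. by rewrite -(gmulVg x) gmulA mulgV gmul1g. Qed.

Lemma mulKg x y : gmul (ginv x) (gmul x y) = y.
Proof. by rewrite gmulA gmulVg gmul1g. Qed.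

Lemma mulVKg x y : gmul x (gmul (ginv x) y) = y.
Proof. by rewrite gmulA mulgV gmul1g. Qed.

Lemma mulgK x y : gmul (gmul y x) (ginv x) = y.
Proof. by rewrite -gmulA mulgV mulg1. Qed.

Lemma mulgVK x y : gmul (gmul y (ginv x)) x = y.
Proof. by rewrite -gmulA gmulVg mulg1. Qed.

Lemma mulgI {x y z} : gmul x y = gmul x z -> y = z.
Proof. by move=> e; rewrite -(mulKg x y) e mulKg. Qed.

Lemma mulIg {x y z} : gmul y x = gmul z x -> y = z.
Proof. by move=> e; rewrite -(mulgK x y) -(mulgK x z) e. Qed.

Lemma invgK x : ginv (ginv x) = x.
Proof. by apply: (@mulIg (ginv x)); rewrite gmulVg mulgV. Qed.

Lemma invMg x y : ginv (gmul x y) = gmul (ginv y) (ginv x).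
Proof. by apply: (@mulgI (gmul x y)); rewrite mulgV -gmulA mulVKg mulgV. Qed.

Lemma in_centre1 : in_centre (gone G).
Proof. by move=> g; rewrite gmul1g mulg1. Qed.

Lemma in_centreV {z} : in_centre z -> in_centre (ginv z).
Proof. by move=> cz g; apply: (@mulgI z); rewrite mulVKg gmulA cz mulgK. Qed.

Lemma in_centreM y z : in_centre y -> in_centre z -> in_centre (gmul y z).
Proof. by move=> cy cz g; rewrite -gmulA cz gmulA cy gmulA. Qed.

Lemma centre_index_classifier k : centre_index G k ->
  exists rho : G -> 'I_k, forall x y, rho x = rho y -> in_centre (gmul (ginv x) y).
Proof.
case=> r [_ cover].
exists (fun x => proj1_sig (constructive_indefinite_description _ (cover x))).
move=> x y; do 2!case: constructive_indefinite_description => /=.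
move=> i cy j cx eji; subst j.
have -> : gmul (ginv x) y = gmul (ginv (gmul (ginv (r i)) x)) (gmul (ginv (r i)) y).
  by rewrite invMg invgK -gmulA mulVKg.
by apply: in_centreM cy; apply: in_centreV.
Qed.

End GroupTheory.

Definition central_tuple {G : grp} {n} (z : 'I_n -> G) : Prop :=
  forall i, in_centre (z i).

Lemma centre_index_power {G : grp} {k : nat} (n : nat) : centre_index G k ->
  exists rho : ('I_n -> G) -> {ffun 'I_n -> 'I_k},
    forall x y, rho x = rho y -> central_tuple (tmul (tinv x) y).
Proof.
case/centre_index_classifier=> rho rhoC.
exists (fun x => [ffun i => rho (x i)]) => x y /ffunP exy i.
by apply: rhoC; have := exy i; rewrite !ffunE.
Qed.

Section Tuples.
Context {G : grp} {n : nat}.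
Implicit Types a b : 'I_n -> G.

Lemma tmulVKg a b : tmul a (tmul (tinv a) b) = b.
Proof. by apply: functional_extensionality => i; rewrite /tmul /tinv mulVKg. Qed.

Lemma tmulgVK a b : tmul (tmul b (tinv a)) a = b.
Proof. by apply: functional_extensionality => i; rewrite /tmul /tinv mulgVK. Qed.

End Tuples.

Section Largeness.
Context {G : grp} {n : nat} {S X : ('I_n -> G) -> Prop}.
Hypotheses (hS : is_subgroup S) (XS : forall x, X x -> S x).

Lemma is_large_card {T : finType} (a : T -> 'I_n -> G) :
  is_large S X #|T| -> (forall t, S (a t)) ->
  exists h, forall t, X (tmul (tinv (a t)) h).
Proof.
move=> large Sa; have [h Xh] := large (a \o enum_val) (fun i => Sa _).
by exists h => t; rewrite -(enum_rankK t); apply: Xh.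
Qed.

Context {I : finType} {rho : ('I_n -> G) -> I}.

Lemma subgroup_transversal : exists rep : I -> 'I_n -> G,
  (forall i, S (rep i)) /\ (forall x, S x -> rho (rep (rho x)) = rho x).
Proof.
have /fin_all_exists[rep repP] : forall i, exists s,
    S s /\ ((exists2 x, S x & rho x = i) -> rho s = i).
  move=> i.
  case: (classic (exists2 x, S x & rho x = i)) => [[x Sx <-] | none].
    by exists x.
  by exists (@tone G n); split=> [|/none //]; case: hS.
exists rep; split=> [i | x Sx]; first by case: (repP i).
by case: (repP (rho x)) => _; apply; exists x.
Qed.

Context {Z : ('I_n -> G) -> Prop}.
Hypothesis rhoZ : forall x y, rho x = rho y -> Z (tmul (tinv x) y).

Lemma large_common_shift {J : finType} (j0 : J) (hs : J -> 'I_n -> G) :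
  is_large S X (#|J| * #|I|) -> (forall j, S (hs j)) ->
  exists2 z, S z /\ Z z & forall j, X (tmul (hs j) z).
Proof.
move=> large Shs; have [_ [SM SV]] := hS.
have [rep [Srep rep_rho]] := subgroup_transversal.
pose a (t : J * I) := tmul (rep t.2) (tinv (hs t.1)).
have Sa t : S (a t) by apply: SM _ _ (Srep _) (SV _ (Shs _)).
have translate t h : tmul (tinv (a t)) h = tmul (hs t.1) (tmul (tinv (rep t.2)) h).
  by apply: functional_extensionality => i; rewrite /a /tmul /tinv invMg invgK gmulA.
rewrite -card_prod in large; have [h Xh] := is_large_card a large Sa.
have Sh : S h.
  by rewrite -(tmulVKg (a (j0, rho h)) h); apply: SM _ _ (Sa _) (XS _ (Xh _)).
exists (tmul (tinv (rep (rho h))) h).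
  by split; [apply: SM _ _ (SV _ (Srep _)) Sh | apply: rhoZ; rewrite rep_rho].
by move=> j; rewrite -(translate (j, rho h)).
Qed.

End Largeness.

Lemma weval_central {G : grp} {V : Type} (t : V -> G) (w : word V) :
  (forall v, in_centre (t v)) -> in_centre (weval t w).
Proof.
move=> ct; elim: w => [v | | u cu | u cu v cv] /=.
- exact: ct.
- exact: in_centre1.
- exact: in_centreV.
- exact: in_centreM.
Qed.

Lemma weval_mul_central {G : grp} {V : Type} (s t : V -> G) (w : word V) :
  (forall v, in_centre (t v)) ->
  weval (fun v => gmul (s v) (t v)) w = gmul (weval s w) (weval t w).
Proof.
move=> ct; elim: w => [v | | u IHu | u IHu v IHv] /=.
- by [].
- by rewrite gmul1g.
- by rewrite IHu invMg (in_centreV (weval_central t u ct)).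
- rewrite IHu IHv -!gmulA; congr (gmul _ _).
  by rewrite !gmulA (weval_central t u ct).
Qed.

Lemma weval2_mul_central {G : grp} {n m : nat} (w : word ('I_n + 'I_m)) (h z : 'I_n -> G)
    (g : 'I_m -> G) : central_tuple z ->
  weval2 w (tmul h z) g = gmul (weval2 w h g) (weval2 w z (fun _ => gone G)).
Proof.
move=> cz; rewrite /weval2 -weval_mul_central; last first.
  by case=> [i | j]; [apply: cz | apply: in_centre1].
by congr weval; apply: functional_extensionality => -[i | j] //=; rewrite mulg1.
Qed.

Theorem corollary3p6 (G1 : grp) (k n m : nat) (hk : centre_index G1 k)
  (S : ('I_n -> G1) -> Prop) (hS : is_subgroup S)
  (w : word ('I_n + 'I_m)) (g : 'I_m -> G1) (c : G1) :
  is_large S (fun h => S h /\ weval2 w h g = c) (2 * k ^ n) ->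
  forall h, S h -> weval2 w h g = c.
Proof.
move=> large h Sh; have [_ [SM SV]] := hS.
have [rho rhoZ] := centre_index_power n hk.
have {}large : is_large S (fun h => S h /\ weval2 w h g = c)
    (#|{: bool}| * #|{: {ffun 'I_n -> 'I_k}}|).
  by rewrite card_bool card_ffun !card_ord.
have XS x : S x /\ weval2 w x g = c -> S x by case.
have [z1 [Sz1 Zz1] Xz1] :=
  large_common_shift hS XS rhoZ true (fun _ : bool => h) large (fun _ => Sh).
have Shs (b : bool) : S (if b then h else tmul h (tinv z1)).
  by case: b => //; apply: SM _ _ Sh (SV _ Sz1).
have [z [_ Zz] Xz] := large_common_shift hS XS rhoZ true _ large Shs.
have [_ ez1] := Xz1 true; have [_ ez] := Xz true; have [_ ez1z] := Xz false.
rewrite /= weval2_mul_central // in ez1.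
rewrite /= weval2_mul_central // in ez.
rewrite /= weval2_mul_central // in ez1z.
have shift_z1 : weval2 w (tmul h (tinv z1)) g = weval2 w h g.
  exact: mulIg (etrans ez1z (esym ez)).
by rewrite -(tmulgVK z1 h) weval2_mul_central // shift_z1.
Qed.
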